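(* Let $(\Omega,\mathcal F,\mu)$ be a measure space, $p\in[1,\infty]$ and $k\ge1$. Then $\mathscr G_{p,k}$ is a closed subset of $L^p(\Omega,\mathcal F,\mu)$.
   Context: All measures are assumed not identically zero. $\mathscr G_{p,k}$ is the set of functions $\sum_{i=1}^l a_i\mathbf 1_{A_i}$ that belong to $L^p(\Omega,\mathcal F,\mu)$, with $l\le k$, $\{A_i\}$ a measurable partition of $\Omega$, $a_i\in\mathbb R$ (viewed as a subset of $L^p$, i.e. up to $\mu$-a.e. equality). *)

From HB Require Import structures.
From mathcomp Require Import all_boot all_order all_algebra.
From mathcomp Require Import all_classical all_reals all_analysis.
Set Implicit Arguments. Unset Strict Implicit. Unset Printing Implicit Defensive.
Import Order.TTheory GRing.Theory Num.Theory.
Import numFieldNormedType.Exports.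
Local Open Scope classical_set_scope.
Local Open Scope ring_scope.

Definition measurable_partition d (T : measurableType d) (l : nat)
    (A : 'I_l -> set T) : Prop :=
  [/\ forall i, measurable (A i),
      forall i j, i != j -> A i `&` A j = set0 &
      \bigcup_(i in [set: 'I_l]) A i = [set: T]].

Definition step_fun d (T : measurableType d) (R : realType) (l : nat)
    (a : 'I_l -> R) (A : 'I_l -> set T) : T -> R :=
  fun x => \sum_(i < l) a i * \1_(A i) x.

(* G_{p,k}, as a set of functions T -> R; a function belongs to it when its
   L^p class (mu-a.e. equality class) contains a step function
   sum_{i<l} a_i 1_{A_i}, l <= k, {A_i} a measurable partition, lying in L^p. *)
Definition Gpk d (T : measurableType d) (R : realType)
    (mu : {measure set T -> \bar R}) (p : \bar R) (k : nat) : set (T -> R) :=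
  [set f | f \in Lfun mu p /\
     exists (l : nat) (a : 'I_l -> R) (A : 'I_l -> set T),
       [/\ (l <= k)%N, measurable_partition A,
           step_fun a A \in Lfun mu p &
           f = step_fun a A %[ae mu]]].

(* A set S of L^p functions (closed under a.e. equality) is closed in L^p
   (for the L^p (pseudo)metric d(f,g) = N_p[f - g]) iff it contains every
   L^p function adherent to it. *)
Definition Lp_closed d (T : measurableType d) (R : realType)
    (mu : {measure set T -> \bar R}) (p : \bar R) (S : set (T -> R)) : Prop :=
  forall f : T -> R, f \in Lfun mu p ->
    (forall e : R, 0 < e ->
       exists g : T -> R, S g /\ (Lnorm mu p (fun x => EFin (f x - g x)%R) < EFin e)%E) ->
    S f.

(* L^p-closeness implies closeness in measure (Chebyshev's inequality, or the
   essential supremum when p = +oo).  Call v an essential value of f when every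
   set {|f - v| < e} has positive measure; by a countable-grid argument almost
   every value of a measurable f is essential.  If f had k+1 distinct essential
   values, 4δ-separated, then a function g close to f in measure would have to
   take a value within 2δ of each of them, i.e. k+1 distinct values on a set of
   positive measure, while an element of G_{p,k} takes at most k values off a
   null set.  So f takes at most k values almost everywhere and is a.e. a step
   function on a k-block partition. *)

From HB Require Import structures.
From mathcomp Require Import all_boot all_order all_algebra.
From mathcomp Require Import all_classical all_reals all_analysis.
From mathcomp Require Import ring lra.
Import Order.TTheory GRing.Theory Num.Theory.
Import numFieldNormedType.Exports.
Import measurable_realfun ess_sup_inf.
Set Implicit Arguments. Unset Strict Implicit. Unset Printing Implicit Defensive.
Local Open Scope classical_set_scope.
Local Open Scope ring_scope.

Lemma exists_pos_common_bound (R : realFieldType) (X : eqType) (s : seq X)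
    (P : X -> R -> Prop) :
  (forall x u v, 0 < u -> u <= v -> P x v -> P x u) ->
  (forall x, x \in s -> exists2 u, 0 < u & P x u) ->
  exists2 u, 0 < u & forall x, x \in s -> P x u.
Proof.
move=> Pdown; elim: s => [|y s IH] hs; first by exists 1.
have [u u0 Pu] := hs y (mem_head _ _).
have [v v0 Pv] : exists2 v, 0 < v & forall x, x \in s -> P x v.
  by apply: IH => x xs; apply: hs; rewrite in_cons xs orbT.
have uv0 : 0 < Num.min u v by rewrite lt_min u0 v0.
exists (Num.min u v) => // x; rewrite in_cons => /predU1P[->|xs].
- by apply: Pdown Pu => //; rewrite ge_min lexx.
- by apply: Pdown (Pv x xs) => //; rewrite ge_min lexx orbT.
Qed.

Lemma exists_min_dist (R : realFieldType) (c : seq R) :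
  exists2 e : R, 0 < e &
    forall u, u \in c -> forall v, v \in c -> u != v -> e <= `|u - v|.
Proof.
apply: exists_pos_common_bound => [u x y _ xy Py v vc uv|u _].
  exact: le_trans xy (Py v vc uv).
apply: exists_pos_common_bound => [v x y _ xy Py uv|v _].
  exact: le_trans xy (Py uv).
have [->|uv] := eqVneq u v; first by exists 1; rewrite ?eqxx.
by exists `|u - v|; rewrite ?normr_gt0 ?subr_eq0.
Qed.

Lemma cover_of_uniq_size_le (X : eqType) (S : set X) k :
  (forall s : seq X, uniq s -> (forall x, x \in s -> S x) -> (size s <= k)%N) ->
  exists2 a : seq X, (size a <= k)%N & forall x, S x -> x \in a.
Proof.
elim: k S => [|k IH] S H.
  exists [::] => // x Sx; suff : (size [:: x] <= 0)%N by [].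
  by apply: H => // y; rewrite mem_seq1 => /eqP ->.
have [[x0 Sx0]|S0] := pselect (exists x, S x); last first.
  by exists [::] => // x Sx; exfalso; apply: S0; exists x.
have [a sa Sa] : exists2 a : seq X, (size a <= k)%N &
    forall x, S x /\ x != x0 -> x \in a.
  apply: IH => s us sS; suff : (size (x0 :: s) <= k.+1)%N by [].
  apply: H; first by rewrite /= us andbT; apply/negP => /sS[_]; rewrite eqxx.
  by move=> x; rewrite in_cons => /predU1P[->//|/sS[]].
exists (x0 :: a) => // x Sx; rewrite in_cons.
by have [//|xx0] := eqVneq x x0; rewrite Sa.
Qed.

Section measurable_sets_and_step_functions.
Context d (T : measurableType d) (R : realType).

Lemma measurable_norm_ge (h : T -> R) (e : R) :
  measurable_fun setT h -> measurable [set x | e <= `|h x|].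
Proof.
move=> mh; have mnh : measurable_fun setT (fun x => `|h x|).
  exact: measurableT_comp.
have := mnh measurableT _ (measurable_itv `[e, +oo[).
by rewrite setTI; congr measurable; apply/seteqP; split => x /=; rewrite in_itv /= andbT.
Qed.

Lemma measurable_norm_lt (h : T -> R) (e : R) :
  measurable_fun setT h -> measurable [set x | `|h x| < e].
Proof.
move=> mh; have mnh : measurable_fun setT (fun x => `|h x|).
  exact: measurableT_comp.
have := mnh measurableT _ (measurable_itv `]-oo, e[).
by rewrite setTI; congr measurable; apply/seteqP; split => x /=; rewrite in_itv.
Qed.

Lemma step_funE l (a : 'I_l -> R) (A : 'I_l -> set T) i x :
  measurable_partition A -> A i x -> step_fun a A x = a i.
Proof.
move=> [_ disj _] Aix; rewrite /step_fun (bigD1 i)//= indicE mem_set// mulr1.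
rewrite big1 ?addr0// => j ji; rewrite indicE memNset ?mulr0// => Ajx.
by have := disj _ _ ji; rewrite -subset0 => /(_ x); apply.
Qed.

Lemma measurable_step_fun l (a : 'I_l -> R) (A : 'I_l -> set T) :
  measurable_partition A -> measurable_fun setT (step_fun a A).
Proof.
move=> [mA _ _]; apply: measurable_sum => i.
by apply: measurable_funM => //; exact: measurable_indic.
Qed.

Lemma fibers_partition l (lab : T -> 'I_l) :
  (forall i, measurable (lab @^-1` [set i])) ->
  measurable_partition (fun i => lab @^-1` [set i]).
Proof.
move=> mlab; split => //.
- by move=> i j ij; apply/seteqP; split => x // [/= -> jx]; move: ij; rewrite jx eqxx.
- by apply/seteqP; split => x // _; exists (lab x).
Qed.

End measurable_sets_and_step_functions.

Section Lnorm_estimates.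
Context d (T : measurableType d) (R : realType).
Variable mu : {measure set T -> \bar R}.

Lemma Lnorm_ae_eq p (f g : T -> R) :
  measurable_fun setT f -> measurable_fun setT g -> f = g %[ae mu] ->
  ('N[mu]_p[EFin \o f] = 'N[mu]_p[EFin \o g])%E.
Proof.
move=> mf mg fg; rewrite unlock; case: p => [r| |] /=.
- have mpow (h : T -> R) : measurable_fun setT h ->
      measurable_fun setT (fun x => (`|(h x)%:E| `^ r)%E).
    move=> mh; apply/measurable_EFinP.
    exact/(measurableT_comp (measurable_powR r))/measurableT_comp.
  congr (_ `^ _)%E; apply: ae_eq_integral => //; [exact: mpow|exact: mpow|].
  by apply: filterS fg => x + _ => /= ->.
- by case: ifPn => // _; apply: eq_ess_sup; apply: filterS fg => x /= ->.
- by case: ifPn => // _; apply: eq_ess_inf; apply: filterS fg => x /= ->.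
Qed.

Lemma Lfun_ae_eq p (f g : T -> R) :
  f \in Lfun mu p -> measurable_fun setT g -> f = g %[ae mu] -> g \in Lfun mu p.
Proof.
move=> fL mg fg; have mf : measurable_fun setT f.
  by move: (sub_Lfun_mfun fL); rewrite inE.
apply/andP; split; first by rewrite inE.
move: (sub_Lfun_finLfun fL); rewrite !inE /finite_norm /=.
by rewrite (Lnorm_ae_eq p mf mg fg).
Qed.

Lemma Lnorm_chebyshev (r : R) (h : T -> R) (δ : R) :
  0 < r -> measurable_fun setT h -> 0 < δ ->
  ((δ `^ r)%:E * mu [set x | (δ <= `|h x|)%R] <= 'N[mu]_r%:E[EFin \o h] `^ r)%E.
Proof.
move=> r0 mh δ0; rewrite poweR_Lnorm ?gt_eqF// -poweR_EFin.
have := @le_integral_comp_abse _ _ _ mu setT measurableT (fun x => (h x)%:E) δ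
  (poweR ^~ r) (measurable_poweR r) (fun x _ => poweR_ge0 x r).
rewrite setTI; apply => //; last exact/measurable_EFinP.
move=> x y /set_mem + /set_mem + xy; rewrite /= !in_itv /=.
move=> /andP[x0 _] /andP[y0 _].
by apply: (gt0_ler_poweR (ltW r0)) xy; rewrite in_itv /= leey andbT.
Qed.

Lemma Lnorm_small_measure_small (p : \bar R) (δ t : R) :
  (0 < p)%E -> 0 < δ -> 0 < t -> exists2 e : R, 0 < e &
    forall h, measurable_fun setT h -> ('N[mu]_p[EFin \o h] < e%:E)%E ->
      (mu [set x | (δ <= `|h x|)%R] < t%:E)%E.
Proof.
move=> + δ0 t0; case: p => [r| |] //; rewrite ?lte_fin => r0.
- pose e := δ * (t / 2) `^ r^-1.
  have e0 : 0 < e by rewrite mulr_gt0// powR_gt0// divr_gt0.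
  have er : e `^ r = δ `^ r * (t / 2).
    rewrite powRM ?(ltW δ0) ?powR_ge0// -powRrM mulVf ?gt_eqF// powRr1//.
    by rewrite divr_ge0// ltW.
  exists e => // h mh hlt.
  set N := ('N[mu]_r%:E[EFin \o h])%E in hlt *.
  have N0 : (0 <= N)%E := Lnorm_ge0 mu r%:E (EFin \o h).
  have NE : N = (fine N)%:E.
    by rewrite fineK// ge0_fin_numE// (lt_le_trans hlt)// leey.
  have Nr : ((fine N `^ r)%:E < (e `^ r)%:E)%E.
    rewrite lte_fin; apply: gt0_ltr_powR; rewrite ?nnegrE ?fine_ge0 ?(ltW e0)//.
    by rewrite -lte_fin -NE.
  have := Lnorm_chebyshev r0 mh δ0; rewrite -/N NE poweR_EFin.
  move=> /le_lt_trans /(_ Nr).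
  rewrite er EFinM lte_pmul2l ?lte_fin ?powR_gt0// => /lt_le_trans; apply.
  by rewrite lee_fin ler_pdivrMr//; lra.
- exists δ => // h mh; rewrite unlock /=.
  have DT := le_measure mu (mem_set (measurable_norm_ge δ mh)) (mem_set measurableT)
    (@subsetT _ _).
  case: ifPn => [muT|/negbTE muT] hlt; last first.
    apply: le_lt_trans DT (le_lt_trans (_ : mu setT <= 0)%E _).
      by rewrite leNgt muT.
    by rewrite lte_fin.
  have [N [mN N0 subN]] := ess_sup_ge mu (abse \o (EFin \o h)).
  have DN : [set x | (δ <= `|h x|)%R] `<=` N.
    move=> x /= hx; apply: subN => /= hle.
    by have := le_lt_trans hle hlt; rewrite lte_fin ltNge hx.
  have := le_measure mu (mem_set (measurable_norm_ge δ mh)) (mem_set mN) DN.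
  move=> /le_lt_trans; apply.
  by apply: (@le_lt_trans _ _ 0%E); [rewrite -N0|rewrite lte_fin].
Qed.

Definition approx_in_measure (S : set (T -> R)) (f : T -> R) :=
  forall δ t : R, 0 < δ -> 0 < t ->
    exists2 g, S g & (mu [set x | (δ <= `|f x - g x|)%R] < t%:E)%E.

Lemma Lp_approx_in_measure (p : \bar R) (S : set (T -> R)) (f : T -> R) :
  (0 < p)%E -> measurable_fun setT f ->
  (forall g, S g -> measurable_fun setT g) ->
  (forall e : R, 0 < e ->
     exists g, S g /\ (Lnorm mu p (fun x => (f x - g x)%:E) < e%:E)%E) ->
  approx_in_measure S f.
Proof.
move=> p0 mf mS fadh δ t δ0 t0.
have [e e0 small] := Lnorm_small_measure_small p0 δ0 t0.
have [g [Sg fg]] := fadh e e0; exists g => //.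
exact: small (measurable_funB mf (mS g Sg)) fg.
Qed.

End Lnorm_estimates.

Section essential_values.
Context d (T : measurableType d) (R : realType).
Variable mu : {measure set T -> \bar R}.

Definition ess_value (f : T -> R) (v : R) :=
  forall e : R, 0 < e -> (0 < mu [set x | (`|f x - v| < e)%R])%E.

Lemma ae_ess_value (f : T -> R) :
  measurable_fun setT f -> {ae mu, forall x, ess_value f (f x)}.
Proof.
move=> mf.
(* x is an essential value unless f x lies in one of countably many null cells *)
pose cell (m : nat) (z : int) := [set y : R | `|y * m.+1%:R - z%:~R| < 1].
have mcell m z : measurable (f @^-1` cell m z).
  have := @measurable_norm_lt _ _ _ (fun x => f x * m.+1%:R - z%:~R) 1.
  by apply; apply: measurable_funB => //; exact: measurable_funM.
pose null_cell n := if @unpickle (nat * int)%type n is Some (m, z) then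
  if mu (f @^-1` cell m z) == 0%E then f @^-1` cell m z else set0 else set0.
apply: (@negligibleS _ _ _ mu (\bigcup_n null_cell n)); last first.
  apply: negligible_bigcup => n; rewrite /null_cell.
  case: unpickle => [[m z]|]; last exact: negligible_set0.
  by case: eqP => [null|_]; [exists (f @^-1` cell m z); split|exact: negligible_set0].
move=> x /= fx; apply: contrapT => xnull; apply: fx => e e0.
pose m := Num.truncn (2 / e); pose M : R := m.+1%:R.
have M0 : 0 < M by rewrite ltr0n.
have eM : 2 < e * M by rewrite mulrC -ltr_pdivrMr// truncnS_gt.
pose z := Num.floor (f x * M).
have xcell : cell m z (f x).
  have := floor_le (f x * M); have := floorD1_gt (f x * M).
  by rewrite /cell /= ltr_norml intrD -/M -/z; lra.
have cell_sub : f @^-1` cell m z `<=` [set y | `|f y - f x| < e].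
  move=> y /= ycell; suff : `|(f y - f x) * M| < e * M.
    by rewrite normrM (gtr0_norm M0) ltr_pM2r.
  rewrite (_ : _ * M = (f y * M - z%:~R) - (f x * M - z%:~R)); last by ring.
  by apply: le_lt_trans (ler_normB _ _) _; move: ycell xcell; rewrite /cell /= -/M; lra.
apply: lt_le_trans (le_measure mu (mem_set (mcell _ _)) _ cell_sub).
  rewrite lt0e measure_ge0 andbT; apply/eqP => null; apply: xnull.
  by exists (pickle (m, z)) => //; rewrite /null_cell pickleK null eqxx.
by rewrite inE; apply: measurable_norm_lt; apply: measurable_funB.
Qed.

Definition ae_range_le (k : nat) (g : T -> R) :=
  exists2 s : seq R, (size s <= k)%N & {ae mu, forall x, g x \in s}.

Lemma ae_range_near (f g : T -> R) (s : seq R) (v δ : R) :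
  measurable_fun setT f -> measurable_fun setT g -> {ae mu, forall x, g x \in s} ->
  (mu [set x | (δ <= `|f x - g x|)%R] < mu [set x | (`|f x - v| < δ)%R])%E ->
  exists2 w, w \in s & `|w - v| < 2 * δ.
Proof.
move=> mf mg [N [mN N0 gN]] Dlt.
suff [y [fyv fgy Ny]] : exists y, [/\ `|f y - v| < δ, `|f y - g y| < δ & ~ N y].
  exists (g y); first by apply: contrapT => gy; apply: Ny; apply: gN.
  rewrite (_ : g y - v = (f y - v) - (f y - g y)); last by ring.
  by apply: le_lt_trans (ler_normB _ _) _; lra.
apply: contrapT => noy.
have sub : [set x | (`|f x - v| < δ)%R] `<=` [set x | (δ <= `|f x - g x|)%R] `|` N.
  move=> x xv; apply: contrapT => /not_orP[xD Nx]; apply: noy.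
  by exists x; split => //; rewrite ltNge; apply/negP.
have mD : measurable [set x | (δ <= `|f x - g x|)%R].
  by apply: measurable_norm_ge; exact: measurable_funB.
have mB : measurable [set x | (`|f x - v| < δ)%R].
  by apply: measurable_norm_lt; exact: measurable_funB.
have DN : (mu ([set x | (δ <= `|f x - g x|)%R] `|` N) <=
    mu [set x | (δ <= `|f x - g x|)%R])%E by rewrite measureU0.
have := le_measure mu (mem_set mB) (mem_set (measurableU _ _ mD mN)) sub.
by move=> /le_trans /(_ DN) /le_lt_trans /(_ Dlt); rewrite ltxx.
Qed.

Lemma ess_values_size_le k (S : set (T -> R)) (f : T -> R) :
  measurable_fun setT f -> (forall g, S g -> measurable_fun setT g) ->
  (forall g, S g -> ae_range_le k g) -> approx_in_measure mu S f ->
  forall c : seq R, uniq c -> (forall v, v \in c -> ess_value f v) ->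
  (size c <= k)%N.
Proof.
move=> mf mS rS fS c uc cf.
have [e e0 csep] := exists_min_dist c; pose δ := e / 4.
have δ0 : 0 < δ by rewrite divr_gt0.
have [t t0 ct] : exists2 t : R, 0 < t &
    forall v, v \in c -> (t%:E <= mu [set x | (`|f x - v| < δ)%R])%E.
  apply: exists_pos_common_bound => [v x y _ xy|v vc].
    by apply: le_trans; rewrite lee_fin.
  have := cf v vc δ δ0; case: (mu _) => [m| |]// m0.
    by exists m; rewrite -?lte_fin.
  by exists 1; rewrite ?leey.
have [g Sg fg] := fS δ t δ0 t0; have [s sk gs] := rS g Sg.
have /choice[w wP] : forall v, exists w, v \in c -> w \in s /\ `|w - v| < 2 * δ.
  move=> v; have [vc|_] := boolP (v \in c); last by exists 0.
  have [w ws wv] := ae_range_near mf (mS g Sg) gs (lt_le_trans fg (ct v vc)).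
  by exists w.
have winj : {in c &, injective w}.
  move=> u v uin vin wuv; apply/eqP; apply: contraT => uv.
  have := csep u uin v vin uv; have [_] := wP u uin; have [_] := wP v vin.
  rewrite wuv /δ; have := ler_normB (w v - v) (w v - u).
  by rewrite (_ : w v - v - (w v - u) = u - v); [lra|ring].
rewrite -(size_map w) (leq_trans _ sk)// uniq_leq_size ?map_inj_in_uniq//.
by move=> _ /mapP[v vc ->]; case: (wP v vc).
Qed.

Lemma ae_range_le_of_ess_values k (f : T -> R) : measurable_fun setT f ->
  (forall c, uniq c -> (forall v, v \in c -> ess_value f v) -> (size c <= k)%N) ->
  ae_range_le k f.
Proof.
move=> mf fk; have [s sk sf] := cover_of_uniq_size_le fk.
by exists s => //; apply: filterS (ae_ess_value mf) => x; exact: sf.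
Qed.

Lemma Gpk_ae_range_le p k g : Gpk mu p k g -> ae_range_le k g.
Proof.
move=> [_ [l [a [A [lk Apart _ gA]]]]].
exists (map a (enum 'I_l)); first by rewrite size_map size_enum_ord.
apply: filterS gA => x /(_ I) ->.
have [_ _ cover] := Apart; have : [set: T] x by [].
rewrite -cover => -[i _ Aix].
by rewrite (step_funE a Apart Aix) map_f// mem_enum.
Qed.

Lemma ae_range_step_fun k (f : T -> R) :
  measurable_fun setT f -> ae_range_le k.+1 f ->
  exists a : 'I_k.+1 -> R, exists2 A : 'I_k.+1 -> set T,
    measurable_partition A & f = step_fun a A %[ae mu].
Proof.
move=> mf [s sk [N [mN N0 fN]]].
have fs x : ~ N x -> f x \in s.
  by move=> Nx; apply: contrapT => fx; apply: Nx; apply: fN.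
pose lab x : 'I_k.+1 := if x \in N then ord0 else inord (index (f x) s).
have labE x : ~ N x -> lab x = inord (index (f x) s).
  by move=> Nx; rewrite /lab memNset.
have mlab i : measurable (lab @^-1` [set i]).
  pose V := [set v | v \in s /\ inord (index v s) = i].
  have -> : lab @^-1` [set i] =
      (if i == ord0 then N else set0) `|` (~` N `&` f @^-1` V).
    apply/seteqP; split => x /=.
    - have [Nx labi|Nx labi] := pselect (N x).
        by left; move: labi; rewrite /lab mem_set// => <-; rewrite eqxx.
      by right; split => //; split; [exact: fs|rewrite -labE].
    - case=> [|[Nx [_ <-]]]; last exact: labE.
      by case: eqP => // -> Nx; rewrite /lab mem_set.
  apply: measurableU; first by case: eqP.
  apply: measurableI; first exact: measurableC.
  rewrite -[_ @^-1` _]setTI; apply: mf => //.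
  apply: countable_measurable; first exact: measurable_set1.
  apply/finite_set_countable/(sub_finite_set _ (finite_seq s)).
  by move=> v [].
exists (fun i => nth 0 s i), (fun i => lab @^-1` [set i]).
  exact: fibers_partition.
exists N; split => // x /= ne; apply: contrapT => Nx; apply: ne => _.
rewrite (@step_funE _ _ _ _ _ _ (lab x) _ (fibers_partition mlab))//.
by rewrite labE// inordK ?nth_index ?fs// (leq_trans _ sk)// index_mem fs.
Qed.

End essential_values.

Theorem corollary2p14 (d : measure_display) (T : measurableType d)
    (R : realType) (mu : {measure set T -> \bar R}) (p : \bar R) (k : nat) :
  mu [set: T] != 0%E -> (1 <= p)%E -> (1 <= k)%N ->
  Lp_closed mu p (Gpk mu p k).
Proof.
case: k => // k _ p1 _ f fL fadh.
have mLfun g : g \in Lfun mu p -> measurable_fun setT g.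
  by move=> /sub_Lfun_mfun; rewrite inE.
have mf := mLfun f fL.
have mGpk g : Gpk mu p k.+1 g -> measurable_fun setT g.
  by move=> [gL _]; exact: mLfun.
have p0 : (0 < p)%E by apply: lt_le_trans p1.
have fapprox := Lp_approx_in_measure p0 mf mGpk fadh.
have fess := ess_values_size_le mf mGpk (@Gpk_ae_range_le _ _ _ mu p _) fapprox.
have [a [A Apart fA]] := ae_range_step_fun mf (ae_range_le_of_ess_values mf fess).
split => //; exists k.+1, a, A; split => //.
exact: Lfun_ae_eq fL (measurable_step_fun a Apart) fA.
Qed.
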